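(* Consider, for parameters $p>0$ and $r>0$, the planar system $$\dot x = -x-y,\qquad \dot y = ry+px-x^2y ,$$ equivalently, after the linear change of coordinates $(x,-(x+y))\mapsto(x,y)$, $$\dot x = y,\qquad \dot y=(r-p)x+(r-1)y-x^2y-x^3 .$$ At the parameter value $(p,r)=(1,1)$ the Jacobian of the vector field at the equilibrium $(0,0)$ has a double-zero eigenvalue (and is not the zero matrix), so $(p,r)=(1,1)$ is a Bogdanov–Takens bifurcation point with $\mathbb{Z}_2$ symmetry, at which the pitchfork bifurcation line $r=p$, the supercritical Hopf line $\{r=1,\ p>1\}$ of $(0,0)$, and the subcritical Hopf line $\{p=1,\ r>1\}$ of the nontrivial equilibria meet.
   Context: This is the simplified symmetric two-dimensional Maasch–Saltzman model; the system is invariant under $(x,y)\mapsto(-x,-y)$. For $r>p$ it has the nontrivial equilibria $(\pm\sqrt{r-p},\mp\sqrt{r-p})$ in the original coordinates. *)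

From Stdlib Require Import Reals.
From Coquelicot Require Import Coquelicot.
Open Scope R_scope.

Definition vf (p r : R) (z : R * R) : R * R :=
  (- fst z - snd z, r * snd z + p * fst z - fst z ^ 2 * snd z).

Definition comp (i : nat) (F : R * R -> R * R) : R * R -> R :=
  fun z => match i with O => fst (F z) | _ => snd (F z) end.

Definition pd (j : nat) (g : R * R -> R) : R * R -> R :=
  fun z => match j with
           | O => Derive (fun t => g (t, snd z)) (fst z)
           | _ => Derive (fun t => g (fst z, t)) (snd z)
           end.

Definition jac (F : R * R -> R * R) (z : R * R) (i j : nat) : R := pd j (comp i F) z.

Definition equilibrium (F : R * R -> R * R) (z : R * R) : Prop := F z = (0, 0).

Definition ci (w : R) : C := (0, w).

Definition charpoly (F : R * R -> R * R) (z : R * R) (l : C) : C :=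
  ((RtoC (jac F z 0 0) - l) * (RtoC (jac F z 1 1) - l)
   - RtoC (jac F z 0 1 * jac F z 1 0))%C.

Definition is_eigenvalue F z (l : C) : Prop := charpoly F z l = RtoC 0.

Definition double_zero_eigenvalue F z : Prop := forall l : C, charpoly F z l = (l * l)%C.

Definition jac_nonzero F z : Prop :=
  exists i j : nat, (i <= 1)%nat /\ (j <= 1)%nat /\ jac F z i j <> 0.

Definition imag_pair F z (w : R) : Prop :=
  0 < w /\ forall l : C, charpoly F z l = ((l - ci w) * (l + ci w))%C.

(* ---------- first Lyapunov coefficient (Kuznetsov, Elements of Applied
   Bifurcation Theory, formula (3.20)) ---------- *)
Definition cvec := (C * C)%type.
Definition cv (u : cvec) (i : nat) : C := match i with O => fst u | _ => snd u end.
Definition sum2 (f : nat -> C) : C := (f 0%nat + f 1%nat)%C.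
Definition cconjv (u : cvec) : cvec := (Cconj (fst u), Cconj (snd u)).
Definition cscal (a : C) (u : cvec) : cvec := (a * fst u, a * snd u)%C.
Definition cdot (p q : cvec) : C := sum2 (fun i => Cconj (cv p i) * cv q i)%C.

Definition Aapp F z (u : cvec) : cvec :=
  (sum2 (fun j => RtoC (jac F z 0 j) * cv u j)%C,
   sum2 (fun j => RtoC (jac F z 1 j) * cv u j)%C).
Definition ATapp F z (u : cvec) : cvec :=
  (sum2 (fun j => RtoC (jac F z j 0) * cv u j)%C,
   sum2 (fun j => RtoC (jac F z j 1) * cv u j)%C).

Definition Bform F z (u v : cvec) : cvec :=
  let Bi i := sum2 (fun j => sum2 (fun k =>
                RtoC (pd k (pd j (comp i F)) z) * cv u j * cv v k))%C in
  (Bi 0%nat, Bi 1%nat).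
Definition Cform F z (u v w : cvec) : cvec :=
  let Ci i := sum2 (fun j => sum2 (fun k => sum2 (fun m =>
                RtoC (pd m (pd k (pd j (comp i F))) z) * cv u j * cv v k * cv w m)))%C in
  (Ci 0%nat, Ci 1%nat).

Definition csolve (m00 m01 m10 m11 : C) (w : cvec) : cvec :=
  let d := (m00 * m11 - m01 * m10)%C in
  ((m11 * fst w - m01 * snd w) / d, (m00 * snd w - m10 * fst w) / d)%C.
Definition Ainv F z (w : cvec) : cvec :=
  csolve (RtoC (jac F z 0 0)) (RtoC (jac F z 0 1))
         (RtoC (jac F z 1 0)) (RtoC (jac F z 1 1)) w.
Definition Rinv2 F z (om : R) (w : cvec) : cvec :=
  csolve (ci (2 * om) - RtoC (jac F z 0 0))%C (- RtoC (jac F z 0 1))%C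
         (- RtoC (jac F z 1 0))%C (ci (2 * om) - RtoC (jac F z 1 1))%C w.

Definition lyap1 F z (om : R) (q p : cvec) : R :=
  / (2 * om) *
  Re (cdot p (Cform F z q q (cconjv q))
      - RtoC 2 * cdot p (Bform F z q (Ainv F z (Bform F z q (cconjv q))))
      + cdot p (Bform F z (cconjv q) (Rinv2 F z om (Bform F z q q))))%C.

Definition hopf_eigvecs F z (om : R) (q p : cvec) : Prop :=
  Aapp F z q = cscal (ci om) q /\ ATapp F z p = cscal (ci (- om)) p /\ cdot p q = RtoC 1.

Definition hopf_supercritical F z : Prop :=
  exists om, imag_pair F z om /\
    forall q p, hopf_eigvecs F z om q p -> lyap1 F z om q p < 0.
Definition hopf_subcritical F z : Prop :=
  exists om, imag_pair F z om /\
    forall q p, hopf_eigvecs F z om q p -> 0 < lyap1 F z om q p.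

Definition trJ F z : R := jac F z 0 0 + jac F z 1 1.

From Pilot Require Import Defs.
From Stdlib Require Import Reals Lra Lia FunctionalExtensionality.
From Coquelicot Require Import Coquelicot.
Open Scope R_scope.

(* The Jacobian of the field at (x, y) is [[-1, -1], [p - 2xy, r - x^2]], so every
   spectral condition is a condition on its trace r - x^2 - 1 and its determinant
   p - 2xy - r + x^2.  All Hopf points in question have the form (a, -a) with
   r = 1 + a^2, and there the first Lyapunov coefficient, for any normalized
   eigenvectors with frequency w, equals (6a^2 - w^2) / (2w^3) |q_1|^2.  It is
   negative at the origin (a = 0) and positive at the nontrivial equilibria, where
   p = 1 forces w^2 = 2a^2. *)

Lemma pd0_is_derive (g h : R * R -> R) :
  (forall x y, is_derive (fun t => g (t, y)) x (h (x, y))) -> pd 0 g = h.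
Proof.
  intros Hd; apply functional_extensionality; intros [x y]; exact (is_derive_unique _ _ _ (Hd x y)).
Qed.

Lemma pd1_is_derive (g h : R * R -> R) :
  (forall x y, is_derive (fun t => g (x, t)) y (h (x, y))) -> pd 1 g = h.
Proof.
  intros Hd; apply functional_extensionality; intros [x y]; exact (is_derive_unique _ _ _ (Hd x y)).
Qed.

Ltac solve_pd :=
  first [apply pd0_is_derive | apply pd1_is_derive]; intros; simpl; auto_derive; auto; ring.

Lemma pd_const j c : pd j (fun _ : R * R => c) = fun _ => 0.
Proof. destruct j; solve_pd. Qed.

Lemma pd_x_scal_fst c : pd 0 (fun z : R * R => c * fst z) = fun _ => c.
Proof. solve_pd. Qed.
Lemma pd_y_scal_fst c : pd 1 (fun z : R * R => c * fst z) = fun _ => 0.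
Proof. solve_pd. Qed.
Lemma pd_x_scal_snd c : pd 0 (fun z : R * R => c * snd z) = fun _ => 0.
Proof. solve_pd. Qed.
Lemma pd_y_scal_snd c : pd 1 (fun z : R * R => c * snd z) = fun _ => c.
Proof. solve_pd. Qed.

Section VectorFieldDerivatives.
Variables p r : R.

Lemma pd_x_vf1 : pd 0 (Defs.comp 0 (vf p r)) = fun _ => -1.
Proof. solve_pd. Qed.
Lemma pd_y_vf1 : pd 1 (Defs.comp 0 (vf p r)) = fun _ => -1.
Proof. solve_pd. Qed.
Lemma pd_x_vf2 : pd 0 (Defs.comp 1 (vf p r)) = fun z => p - 2 * fst z * snd z.
Proof. solve_pd. Qed.
Lemma pd_y_vf2 : pd 1 (Defs.comp 1 (vf p r)) = fun z => r - fst z ^ 2.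
Proof. solve_pd. Qed.
Lemma pd_xx_vf2 : pd 0 (fun z : R * R => p - 2 * fst z * snd z) = fun z => -2 * snd z.
Proof. solve_pd. Qed.
Lemma pd_xy_vf2 : pd 1 (fun z : R * R => p - 2 * fst z * snd z) = fun z => -2 * fst z.
Proof. solve_pd. Qed.
Lemma pd_yx_vf2 : pd 0 (fun z : R * R => r - fst z ^ 2) = fun z => -2 * fst z.
Proof. solve_pd. Qed.
Lemma pd_yy_vf2 : pd 1 (fun z : R * R => r - fst z ^ 2) = fun _ => 0.
Proof. solve_pd. Qed.

End VectorFieldDerivatives.

Ltac rewrite_pd_vf :=
  repeat rewrite ?pd_x_vf1, ?pd_y_vf1, ?pd_x_vf2, ?pd_y_vf2, ?pd_xx_vf2, ?pd_xy_vf2,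
    ?pd_yx_vf2, ?pd_yy_vf2, ?pd_x_scal_fst, ?pd_y_scal_fst, ?pd_x_scal_snd,
    ?pd_y_scal_snd, ?pd_const.

Lemma jac_vf p r x y :
  jac (vf p r) (x, y) 0 0 = -1 /\ jac (vf p r) (x, y) 0 1 = -1 /\
  jac (vf p r) (x, y) 1 0 = p - 2 * x * y /\ jac (vf p r) (x, y) 1 1 = r - x ^ 2.
Proof. unfold jac; rewrite_pd_vf; repeat split. Qed.

Lemma Bform_vf p r x y (u v : cvec) :
  Bform (vf p r) (x, y) u v =
  (RtoC 0, - (2) * (RtoC y * fst u * fst v + RtoC x * (fst u * snd v + snd u * fst v)))%C.
Proof.
  destruct u as [u0 u1], v as [v0 v1].
  unfold Bform, sum2, cv; rewrite_pd_vf; simpl fst; simpl snd.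
  rewrite !RtoC_mult; apply injective_projections; simpl fst; simpl snd; ring.
Qed.

Lemma Cform_vf p r z (u v w : cvec) :
  Cform (vf p r) z u v w =
  (RtoC 0, - (2) * (fst u * fst v * snd w + fst u * snd v * fst w + snd u * fst v * fst w))%C.
Proof.
  destruct u as [u0 u1], v as [v0 v1], w as [w0 w1].
  unfold Cform, sum2, cv; rewrite_pd_vf; simpl fst; simpl snd.
  apply injective_projections; simpl fst; simpl snd; ring.
Qed.

Definition detJ (F : R * R -> R * R) (z : R * R) : R :=
  jac F z 0 0 * jac F z 1 1 - jac F z 0 1 * jac F z 1 0.

Lemma charpoly_trJ_detJ F z l :
  charpoly F z l = (l * l - RtoC (trJ F z) * l + RtoC (detJ F z))%C.
Proof.
  unfold charpoly, trJ, detJ; destruct l as [u v].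
  apply injective_projections; simpl; ring.
Qed.

Lemma is_eigenvalue_0_iff F z : is_eigenvalue F z 0 <-> detJ F z = 0.
Proof.
  unfold is_eigenvalue; rewrite charpoly_trJ_detJ; split; intros H.
  - apply (f_equal fst) in H; simpl in H; lra.
  - rewrite H; apply injective_projections; simpl; ring.
Qed.

Lemma double_zero_eigenvalue_iff F z :
  double_zero_eigenvalue F z <-> trJ F z = 0 /\ detJ F z = 0.
Proof.
  unfold double_zero_eigenvalue; split.
  - intros H; pose proof (H 0%C) as H0; pose proof (H 1%C) as H1.
    rewrite charpoly_trJ_detJ in H0, H1.
    apply (f_equal fst) in H0; apply (f_equal fst) in H1; simpl in H0, H1; lra.
  - intros [Htr Hdet] l; rewrite charpoly_trJ_detJ, Htr, Hdet.
    destruct l; apply injective_projections; simpl; ring.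
Qed.

Lemma imag_pair_iff F z w :
  imag_pair F z w <-> 0 < w /\ trJ F z = 0 /\ detJ F z = w * w.
Proof.
  unfold imag_pair; split; intros [Hw H]; split; auto.
  - pose proof (H 0%C) as H0; pose proof (H 1%C) as H1.
    rewrite charpoly_trJ_detJ in H0, H1.
    apply (f_equal fst) in H0; apply (f_equal fst) in H1; simpl in H0, H1; lra.
  - destruct H as [Htr Hdet]; intros l; rewrite charpoly_trJ_detJ, Htr, Hdet.
    destruct l; apply injective_projections; unfold ci; simpl; ring.
Qed.

Lemma ex_imag_pair_iff F z :
  (exists w, imag_pair F z w) <-> trJ F z = 0 /\ 0 < detJ F z.
Proof.
  split.
  - intros [w Hw]; apply imag_pair_iff in Hw as (Hw & Htr & Hdet); split; nra.
  - intros [Htr Hdet]; exists (sqrt (detJ F z)); apply imag_pair_iff.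
    split; [apply sqrt_lt_R0; lra | split; [exact Htr | rewrite sqrt_sqrt; lra]].
Qed.

Lemma trJ_vf p r x y : trJ (vf p r) (x, y) = r - x ^ 2 - 1.
Proof. unfold trJ; destruct (jac_vf p r x y) as (-> & _ & _ & ->); ring. Qed.

Lemma detJ_vf p r x y : detJ (vf p r) (x, y) = p - 2 * x * y - r + x ^ 2.
Proof. unfold detJ; destruct (jac_vf p r x y) as (-> & -> & -> & ->); ring. Qed.

Lemma RtoC_neq_0 x : x <> 0 -> RtoC x <> 0%C.
Proof. intros Hx H; apply Hx; exact (f_equal fst H). Qed.

Lemma Cconj_ci w : Cconj (ci w) = (- ci w)%C.
Proof. apply injective_projections; simpl; ring. Qed.

Lemma Cconj_RtoC x : Cconj (RtoC x) = RtoC x.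
Proof. apply injective_projections; simpl; ring. Qed.

Lemma ci_opp w : ci (- w) = (- ci w)%C.
Proof. apply injective_projections; simpl; ring. Qed.

Lemma ci_neq_0 w : w <> 0 -> ci w <> 0%C.
Proof. intros Hw H; apply Hw; exact (f_equal snd H). Qed.

Lemma ci_double w : ci (2 * w) = (2 * ci w)%C.
Proof. apply injective_projections; simpl; ring. Qed.

Lemma cdot_vertical (u : cvec) t : cdot u (RtoC 0, t) = (Cconj (snd u) * t)%C.
Proof. unfold cdot, sum2; cbn [cv fst snd]; ring. Qed.

Lemma csolve_vertical m00 m01 m10 m11 b d : (m00 * m11 - m01 * m10)%C = d ->
  csolve m00 m01 m10 m11 (RtoC 0, b) = (- (m01 * b) / d, m00 * b / d)%C.
Proof.
  intros <-; unfold csolve; simpl fst; simpl snd.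
  f_equal; f_equal; ring.
Qed.

Section HopfPoint.
Variables p a w : R.
Hypothesis w_gt0 : 0 < w.
Hypothesis w2_detJ : w * w = p - 1 + 2 * a * a.

Lemma Ainv_vertical b :
  Ainv (vf p (1 + a ^ 2)) (a, - a) (RtoC 0, b) = (b / RtoC (w * w), - b / RtoC (w * w))%C.
Proof.
  unfold Ainv; destruct (jac_vf p (1 + a ^ 2) a (- a)) as (-> & -> & -> & ->).
  rewrite (csolve_vertical _ _ _ _ _ (RtoC (w * w))).
  - f_equal; field; apply RtoC_neq_0; nra.
  - apply injective_projections; simpl; nra.
Qed.

Lemma Rinv2_vertical b :
  Rinv2 (vf p (1 + a ^ 2)) (a, - a) w (RtoC 0, b) =
  (b / RtoC (3 * (w * w)), - (1 + 2 * ci w) * b / RtoC (3 * (w * w)))%C.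
Proof.
  unfold Rinv2; destruct (jac_vf p (1 + a ^ 2) a (- a)) as (-> & -> & -> & ->).
  rewrite (csolve_vertical _ _ _ _ _ (RtoC (- (3 * (w * w))))).
  - rewrite RtoC_opp, ci_double; f_equal; field; apply RtoC_neq_0; nra.
  - apply injective_projections; unfold ci; simpl; [nra | ring].
Qed.

Lemma hopf_eigvecs_vf q u :
  hopf_eigvecs (vf p (1 + a ^ 2)) (a, - a) w q u ->
  snd q = (- (1 + ci w) * fst q)%C /\ (Cconj (snd u) * fst q)%C = (/ (- (2) * ci w))%C.
Proof.
  destruct q as [Q S], u as [P0 P1]; intros (Hq & Hu & Hn).
  unfold Aapp, ATapp, cscal, cdot, sum2 in Hq, Hu, Hn; cbn [cv fst snd] in Hq, Hu, Hn |- *.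
  destruct (jac_vf p (1 + a ^ 2) a (- a)) as (J00 & J01 & _ & J11).
  rewrite J00, J01 in Hq; rewrite J01, J11 in Hu.
  apply (f_equal fst) in Hq; apply (f_equal snd) in Hu; cbn [fst snd] in Hq, Hu.
  assert (Hw : ci w <> 0%C) by (apply ci_neq_0; lra).
  assert (HS : S = (- (1 + ci w) * Q)%C).
  { replace S with (- (RtoC (-1) * Q + RtoC (-1) * S) - Q)%C by ring; rewrite Hq; ring. }
  assert (HP : P0 = ((1 + ci w) * P1)%C).
  { replace (1 + a ^ 2 - a ^ 2) with 1 in Hu by ring.
    replace P0 with (- (RtoC (-1) * P0 + RtoC 1 * P1) + P1)%C by ring.
    rewrite Hu, ci_opp; ring. }
  split; [exact HS|].
  rewrite HP, HS, Cmult_conj, Cplus_conj, Cconj_RtoC, Cconj_ci in Hn.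
  replace (Cconj P1 * Q)%C
    with (/ (- (2) * ci w) * ((1 + - ci w) * Cconj P1 * Q + Cconj P1 * (- (1 + ci w) * Q)))%C
    by (field; exact Hw).
  rewrite Hn; ring.
Qed.

Lemma lyap1_vf q u :
  hopf_eigvecs (vf p (1 + a ^ 2)) (a, - a) w q u ->
  lyap1 (vf p (1 + a ^ 2)) (a, - a) w q u = (6 * a ^ 2 - w ^ 2) / (2 * w ^ 3) * Cmod (fst q) ^ 2.
Proof.
  intros Hqu; destruct (hopf_eigvecs_vf q u Hqu) as [HS Hn].
  destruct q as [Q S], u as [P0 P1]; cbn [fst snd] in HS, Hn |- *; subst S.
  unfold lyap1, cconjv; cbn [fst snd].
  rewrite Cform_vf, !Bform_vf, Ainv_vertical, Rinv2_vertical; cbn [fst snd].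
  rewrite !cdot_vertical; cbn [fst snd].
  rewrite !Cmult_conj, !Copp_conj, !Cplus_conj, !Cconj_RtoC, !Cconj_ci, !RtoC_mult, !RtoC_opp.
  assert (Hw : RtoC w <> 0%C) by (apply RtoC_neq_0; lra).
  (* All quadratic and cubic terms are vertical, so only [Cconj P1 * Q], fixed by the
     normalization, and [|Q|^2] survive. *)
  transitivity (/ (2 * w) * Re (Cconj P1 * Q * (Q * Cconj Q) * ((3 + ci w) *
    (2 - 24 * a * a / (w * w) + 4 * a * a * (3 + 2 * ci w) / (3 * (w * w)))))%C).
  { do 2 f_equal; field; exact Hw. }
  rewrite Hn, <- Cmod2_conj; generalize (Cmod Q ^ 2); intros m.
  unfold Re, Cdiv, Cminus, Cmult, Cinv, Cplus, Copp, RtoC, ci; simpl; field; lra.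
Qed.

Lemma imag_pair_hopf_point : imag_pair (vf p (1 + a ^ 2)) (a, - a) w.
Proof.
  apply imag_pair_iff; rewrite trJ_vf, detJ_vf; repeat split; [lra | ring | nra].
Qed.

Lemma hopf_eigvecs_fst_neq_0 q u :
  hopf_eigvecs (vf p (1 + a ^ 2)) (a, - a) w q u -> fst q <> 0%C.
Proof.
  intros Hqu Hq; destruct (hopf_eigvecs_vf q u Hqu) as [_ Hn].
  rewrite Hq, Cmult_0_r in Hn.
  apply C1_nz; rewrite <- (Cinv_r (- (2) * ci w)), <- Hn; [ring|].
  apply Cmult_neq_0; [intros H; apply (f_equal fst) in H; simpl in H; lra | apply ci_neq_0; lra].
Qed.

Lemma Cmod_fst_sqr_gt_0 q u :
  hopf_eigvecs (vf p (1 + a ^ 2)) (a, - a) w q u -> 0 < Cmod (fst q) ^ 2.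
Proof.
  intros Hqu; apply pow_lt, Cmod_gt_0; exact (hopf_eigvecs_fst_neq_0 q u Hqu).
Qed.

Lemma lyap1_vf_pos q u : w ^ 2 < 6 * a ^ 2 ->
  hopf_eigvecs (vf p (1 + a ^ 2)) (a, - a) w q u -> 0 < lyap1 (vf p (1 + a ^ 2)) (a, - a) w q u.
Proof.
  intros Hlt Hqu; rewrite (lyap1_vf q u Hqu).
  apply Rmult_lt_0_compat; [|exact (Cmod_fst_sqr_gt_0 q u Hqu)].
  apply Rdiv_lt_0_compat; [lra | apply Rmult_lt_0_compat; [lra | apply pow_lt; lra]].
Qed.

Lemma lyap1_vf_neg q u : 6 * a ^ 2 < w ^ 2 ->
  hopf_eigvecs (vf p (1 + a ^ 2)) (a, - a) w q u -> lyap1 (vf p (1 + a ^ 2)) (a, - a) w q u < 0.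
Proof.
  intros Hlt Hqu; rewrite (lyap1_vf q u Hqu), <- (Rmult_0_l (Cmod (fst q) ^ 2)).
  apply Rmult_lt_compat_r; [exact (Cmod_fst_sqr_gt_0 q u Hqu)|].
  assert (0 < / (2 * w ^ 3))
    by (apply Rinv_0_lt_compat, Rmult_lt_0_compat; [lra | apply pow_lt; lra]).
  unfold Rdiv; nra.
Qed.

End HopfPoint.

Lemma hopf_supercritical_origin p : 1 < p -> hopf_supercritical (vf p 1) (0, 0).
Proof.
  intros Hp.
  replace (vf p 1) with (vf p (1 + 0 ^ 2)) by (f_equal; ring).
  replace ((0, 0) : R * R) with (0, - 0) by (f_equal; ring).
  assert (Hw : 0 < sqrt (p - 1)) by (apply sqrt_lt_R0; lra).
  assert (Hw2 : sqrt (p - 1) * sqrt (p - 1) = p - 1 + 2 * 0 * 0)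
    by (rewrite sqrt_sqrt; lra).
  exists (sqrt (p - 1)); split; [exact (imag_pair_hopf_point _ _ _ Hw Hw2)|].
  intros q u; apply (lyap1_vf_neg _ _ _ Hw Hw2); nra.
Qed.

Lemma hopf_subcritical_antidiagonal a : a <> 0 ->
  hopf_subcritical (vf 1 (1 + a ^ 2)) (a, - a).
Proof.
  intros Ha.
  assert (Hw : 0 < sqrt (2 * a ^ 2)) by (apply sqrt_lt_R0; nra).
  assert (Hw2 : sqrt (2 * a ^ 2) * sqrt (2 * a ^ 2) = 1 - 1 + 2 * a * a)
    by (rewrite sqrt_sqrt; nra).
  exists (sqrt (2 * a ^ 2)); split; [exact (imag_pair_hopf_point _ _ _ Hw Hw2)|].
  intros q u; apply (lyap1_vf_pos _ _ _ Hw Hw2).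
  rewrite <- Rsqr_pow2, Rsqr_sqrt; nra.
Qed.

Lemma pow2_signed_sqrt s x : s * s = 1 -> 0 <= x -> (s * sqrt x) ^ 2 = x.
Proof. intros Hs Hx; rewrite Rpow_mult_distr, pow2_sqrt by exact Hx; nra. Qed.

Lemma equilibrium_vf_iff p r x y :
  equilibrium (vf p r) (x, y) <-> y = - x /\ x * (x ^ 2 - (r - p)) = 0.
Proof.
  unfold equilibrium, vf; cbn [fst snd]; split.
  - intros H; injection H as H1 H2.
    assert (Hy : y = - x) by lra; subst y.
    split; [reflexivity | rewrite <- H2; ring].
  - intros [-> H]; f_equal; [ring | rewrite <- H; ring].
Qed.

Lemma equilibria_vf p r z :
  equilibrium (vf p r) z <->
  z = (0, 0) \/
  (p < r /\ (z = (sqrt (r - p), - sqrt (r - p)) \/ z = (- sqrt (r - p), sqrt (r - p)))).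
Proof.
  destruct z as [x y]; rewrite equilibrium_vf_iff; split.
  - intros [-> H].
    destruct (Req_dec x 0) as [-> | Hx]; [left; f_equal; ring | right].
    assert (Hx2 : x ^ 2 = r - p).
    { destruct (Rmult_integral _ _ H); [contradiction | lra]. }
    assert (Hpr : p < r) by (pose proof (Rsqr_pos_lt x Hx); rewrite Rsqr_pow2 in *; lra).
    split; [exact Hpr|].
    replace (sqrt (r - p)) with (Rabs x)
      by (rewrite <- Hx2, <- Rsqr_pow2, sqrt_Rsqr_abs; reflexivity).
    unfold Rabs; destruct (Rcase_abs x); [right | left]; f_equal; ring.
  - intros [H | [Hpr H]]; [injection H as -> ->; split; ring|].
    assert (Ht : sqrt (r - p) ^ 2 = r - p) by (apply pow2_sqrt; lra).
    set (t := sqrt (r - p)) in *.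
    destruct H as [H | H]; injection H as -> ->; (split; [ring | rewrite <- Ht; ring]).
Qed.

Lemma Derive_trJ_origin p : Derive (fun r => trJ (vf p r) (0, 0)) 1 = 1.
Proof.
  rewrite (Derive_ext _ (fun r => r - 0 ^ 2 - 1)) by (intros; apply trJ_vf).
  apply is_derive_unique; auto_derive; auto; ring.
Qed.

Lemma Derive_trJ_nontrivial r s : s * s = 1 -> 1 < r ->
  Derive (fun p => trJ (vf p r) (s * sqrt (r - p), - (s * sqrt (r - p)))) 1 = 1.
Proof.
  intros Hs Hr; apply is_derive_unique.
  apply (is_derive_ext_loc (fun p => p - 1)).
  - apply (filter_imp (fun p => p < r)); [|apply open_lt; exact Hr].
    intros p Hp; cbv beta; rewrite trJ_vf, pow2_signed_sqrt by (auto; lra); lra.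
  - auto_derive; auto; ring.
Qed.

Lemma ex_imag_pair_nontrivial p r s : s * s = 1 -> p < r ->
  (exists w, imag_pair (vf p r) (s * sqrt (r - p), - (s * sqrt (r - p))) w) <-> p = 1.
Proof.
  intros Hs Hpr.
  rewrite ex_imag_pair_iff, trJ_vf, detJ_vf.
  assert (Ha : (s * sqrt (r - p)) ^ 2 = r - p) by (apply pow2_signed_sqrt; auto; lra).
  set (a := s * sqrt (r - p)) in *.
  split; [intros [Htr _]; lra | intros ->; split; nra].
Qed.

Theorem mainTheorem3 :
  (* Z2 symmetry *)
  (forall p r x y, vf p r (- x, - y) = (- fst (vf p r (x, y)), - snd (vf p r (x, y)))) /\
  (* (p,r) = (1,1): Bogdanov-Takens point: double zero eigenvalue at (0,0), J <> 0 *)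
  (equilibrium (vf 1 1) (0, 0) /\ double_zero_eigenvalue (vf 1 1) (0, 0)
     /\ jac_nonzero (vf 1 1) (0, 0)) /\
  (* pitchfork line r = p: zero eigenvalue of (0,0) exactly on r = p, and the
     nontrivial equilibria exist exactly for r > p *)
  (forall p r, 0 < p -> 0 < r ->
     (is_eigenvalue (vf p r) (0, 0) (RtoC 0) <-> r = p) /\
     (forall z, equilibrium (vf p r) z <->
        z = (0, 0) \/
        (p < r /\ (z = (sqrt (r - p), - sqrt (r - p)) \/ z = (- sqrt (r - p), sqrt (r - p)))))) /\
  (* Hopf line of (0,0): r = 1, p > 1, supercritical and transversal *)
  (forall p r, 0 < p -> 0 < r ->
     ((exists w, imag_pair (vf p r) (0, 0) w) <-> (r = 1 /\ 1 < p))) /\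
  (forall p, 1 < p ->
     hopf_supercritical (vf p 1) (0, 0) /\
     Derive (fun r => trJ (vf p r) (0, 0)) 1 <> 0) /\
  (* Hopf line of the nontrivial equilibria: p = 1, r > 1, subcritical and transversal *)
  (forall p r, 0 < p -> p < r -> forall s, (s = 1 \/ s = -1) ->
     ((exists w, imag_pair (vf p r) (s * sqrt (r - p), - (s * sqrt (r - p))) w) <-> p = 1)) /\
  (forall r, 1 < r -> forall s, (s = 1 \/ s = -1) ->
     hopf_subcritical (vf 1 r) (s * sqrt (r - 1), - (s * sqrt (r - 1))) /\
     Derive (fun p => trJ (vf p r) (s * sqrt (r - p), - (s * sqrt (r - p)))) 1 <> 0).
Proof.
  assert (sign_sqr : forall s : R, s = 1 \/ s = -1 -> s * s = 1)
    by (intros s [-> | ->]; ring).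
  split; [|split; [|split; [|split; [|split; [|split]]]]].
  - intros p r x y; unfold vf; cbn [fst snd]; f_equal; ring.
  - split; [unfold equilibrium, vf; cbn [fst snd]; f_equal; ring | split].
    + apply double_zero_eigenvalue_iff; rewrite trJ_vf, detJ_vf; split; ring.
    + exists 0%nat, 0%nat; destruct (jac_vf 1 1 0 0) as [-> _]; repeat split; [lia | lia | lra].
  - intros p r _ _; split; [|apply equilibria_vf].
    rewrite is_eigenvalue_0_iff, detJ_vf; split; intros; nra.
  - intros p r _ _; rewrite ex_imag_pair_iff, trJ_vf, detJ_vf; split; intros; nra.
  - intros p Hp; split; [exact (hopf_supercritical_origin p Hp)|].
    rewrite Derive_trJ_origin; lra.
  - intros p r _ Hpr s Hs; exact (ex_imag_pair_nontrivial p r s (sign_sqr s Hs) Hpr).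
  - intros r Hr s Hs; split; [|rewrite Derive_trJ_nontrivial by auto; lra].
    assert (Ha : (s * sqrt (r - 1)) ^ 2 = r - 1) by (apply pow2_signed_sqrt; auto; lra).
    set (a := s * sqrt (r - 1)) in *; clearbody a.
    replace r with (1 + a ^ 2) by lra.
    apply hopf_subcritical_antidiagonal; intros ->; lra.
Qed.
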